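(* Let $\Sigma,\Gamma$ be finite alphabets and let $f:\Sigma^*\to\Gamma^*$ be subsequential. Then there exist an alphabet $\Delta$, a function $g:\Sigma^*\to\Delta^*$ that is $2$-TOSL on some tier on $\Sigma\cup\Delta$, and a homomorphism $h:\Delta^*\to\Gamma^*$ such that $f=h\circ g$.
   Context: Strings: $\lambda$ is the empty string; $\rtimes$ is a boundary symbol not in any alphabet. For $m\ge0$, $\mathrm{suff}^m(x)$ is the string of the last $m$ symbols of $\rtimes^mx$. $\mathrm{lcp}(A)$ is the longest common prefix of a set of strings $A$. An SFST is $T=\langle Q,\Sigma,\Gamma,q_0,\to,\sigma\rangle$ with finite state set $Q$, start state $q_0$, transition function $\to:Q\times\Sigma\to Q\times\Gamma^*$ and final output function $\sigma:Q\to\Gamma^*$; extended transitions $q\xrightarrow{x:y}r$ on strings are obtained by composing transitions and concatenating outputs. $T$ computes $f$ if $f(x)=y\sigma(q)$ whenever $q_0\xrightarrow{x:y}q$; $f$ is subsequential if some SFST computes it. A homomorphism $h:A^*\to B^*$ satisfies $h(xy)=h(x)h(y)$ for all $x,y$. For $g:\Sigma^*\to\Delta^*$: $g^{\gets}(x):=\mathrm{lcp}(\{g(xy)\mid y\in\Sigma^*\})$, and $g^{\to}_x$ is defined by $g(xy)=g^{\gets}(x)g^{\to}_x(y)$. A tier on an alphabet $A$ is a homomorphism $\tau:A^*\to A^*$ with $\tau(a)\in\{a,\lambda\}$ for all $a\in A$. $g$ is $j$-TOSL on a tier $\tau$ on $\Sigma\cup\Delta$ if for all $w,x\in\Sigma^*$,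 $\mathrm{suff}^{j-1}(\tau(g^{\gets}(w)))=\mathrm{suff}^{j-1}(\tau(g^{\gets}(x)))$ implies $g^{\to}_w=g^{\to}_x$. *)

From mathcomp Require Import all_boot.
Set Implicit Arguments. Unset Strict Implicit. Unset Printing Implicit Defensive.

(* suff^m(x): last m symbols of (boundary)^m x; boundary symbol encoded as None. *)
Definition suff (A : Type) (m : nat) (x : seq A) : seq (option A) :=
  let t := nseq m None ++ map Some x in drop (size t - m) t.

Definition is_lcp (B : eqType) (A : seq B -> Prop) (p : seq B) : Prop :=
  (forall s, A s -> prefix p s) /\
  (forall q, (forall s, A s -> prefix q s) -> prefix q p).

Definition is_hom (A B : Type) (h : seq A -> seq B) : Prop :=
  forall x y, h (x ++ y) = h x ++ h y.

Definition is_tier (A : Type) (tau : seq A -> seq A) : Prop :=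
  is_hom tau /\ forall a, tau [:: a] = [:: a] \/ tau [:: a] = [::].

Record SFST (S G : Type) := {
  sfst_Q : finType;
  sfst_q0 : sfst_Q;
  sfst_delta : sfst_Q -> S -> sfst_Q * seq G;
  sfst_sigma : sfst_Q -> seq G }.

Fixpoint sfst_run (S G : Type) (T : SFST S G) (q : sfst_Q T) (x : seq S)
  : sfst_Q T * seq G :=
  match x with
  | [::] => (q, [::])
  | a :: x' => let (r, y) := @sfst_delta S G T q a in
               let (r', y') := sfst_run r x' in (r', y ++ y')
  end.

Definition sfst_computes (S G : Type) (T : SFST S G) (f : seq S -> seq G) : Prop :=
  forall x, f x = (sfst_run (sfst_q0 T) x).2 ++ @sfst_sigma S G T (sfst_run (sfst_q0 T) x).1.

Definition subsequential (S G : Type) (f : seq S -> seq G) : Prop :=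
  exists T : SFST S G, sfst_computes T f.

(* g : S^* -> D^* is j-TOSL on tier tau on the alphabet S ∪ D (taken as the
   disjoint union S + D; D-symbols are injected by inr).  g^<-(w) is the lcp
   of {g(wy)}; g^->_w(y) is the unique string with g(wy) = g^<-(w) g^->_w(y),
   i.e. the drop of |g^<-(w)| symbols from g(wy). *)
Definition TOSL (S D : eqType) (j : nat) (tau : seq (S + D)%type -> seq (S + D)%type)
  (g : seq S -> seq D) : Prop :=
  forall (w x : seq S) (pw px : seq D),
    is_lcp (fun s => exists y, s = g (w ++ y)) pw ->
    is_lcp (fun s => exists y, s = g (x ++ y)) px ->
    suff (j - 1) (tau (map inr pw)) = suff (j - 1) (tau (map inr px)) ->
    forall y, drop (size pw) (g (w ++ y)) = drop (size px) (g (x ++ y)).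

From mathcomp Require Import all_boot.

Set Implicit Arguments.
Unset Strict Implicit.
Unset Printing Implicit Defensive.

(* Let g write down the run of the transducer: the transitions (q, a) taken
   while reading x, then the state reached.  Since a transition determines the
   state it leads to, the last symbol of the committed output g<-(w) (the
   transitions of w) determines the state after w, and the rest of the
   transducer's behaviour only depends on that state.  Hence g is 2-TOSL on the
   identity tier, and f is recovered by the homomorphism mapping each
   transition to its output and each state to its final output. *)

Lemma prefix_antisym (T : eqType) (s1 s2 : seq T) :
  prefix s1 s2 -> prefix s2 s1 -> s1 = s2.
Proof.
move=> s12 s21; have /eqP <- : take (size s1) s2 == s1 by rewrite -prefixE.
suff /eqP -> : size s1 == size s2 by rewrite take_size.
by rewrite eqn_leq !size_prefix.
Qed.

Lemma is_lcp_uniq (T : eqType) (A : seq T -> Prop) (p1 p2 : seq T) :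
  is_lcp A p1 -> is_lcp A p2 -> p1 = p2.
Proof.
move=> [pref1 lcp1] [pref2 lcp2].
by apply: prefix_antisym; [apply: lcp2 pref1 | apply: lcp1 pref2].
Qed.

Lemma prefix_cat_cons_neq (T : eqType) (p q s1 s2 : seq T) (x y : T) :
  x != y -> prefix q (p ++ x :: s1) -> prefix q (p ++ y :: s2) -> prefix q p.
Proof.
move=> neq_xy; elim: p q => [|z p IHp] [|c q] //=.
- by move=> /andP[/eqP -> _] /andP[/eqP eq_xy _]; rewrite eq_xy eqxx in neq_xy.
- by move=> /andP[-> q_p1] /andP[_ q_p2]; apply: IHp q_p1 q_p2.
Qed.

Lemma suff1 (A : Type) (s : seq A) : suff 1 s = [:: last None (map Some s)].
Proof.
rewrite /suff /= subn1 size_map.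
elim/last_ind: s => [|s a _] //=.
by rewrite map_rcons size_rcons /= -cats1 drop_size_cat ?size_map // last_cat.
Qed.

Lemma last_Some_map (A B : Type) (f : A -> B) (s : seq A) :
  last None (map Some (map f s)) = omap f (last None (map Some s)).
Proof. by elim/last_ind: s => // s a _; rewrite !map_rcons !last_rcons. Qed.

Lemma is_hom_flatten_map (A B : Type) (h : A -> seq B) :
  is_hom (fun s => flatten (map h s)).
Proof. by move=> x y; rewrite map_cat flatten_cat. Qed.

Lemma is_tier_id (A : Type) : is_tier (@id (seq A)).
Proof. by split=> // a; left. Qed.

Section RunTrace.
Variables (S : eqType) (G : Type) (T : SFST S G).
Local Notation Q := (sfst_Q T).
Local Notation next q a := (sfst_delta q a).1.

Fixpoint sfst_state (q : Q) (x : seq S) : Q :=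
  if x is a :: x' then sfst_state (next q a) x' else q.

Fixpoint sfst_trace (q : Q) (x : seq S) : seq (Q * S) :=
  if x is a :: x' then (q, a) :: sfst_trace (next q a) x' else [::].

Definition trace_word (q : Q) (x : seq S) : seq ((Q * S) + Q) :=
  map inl (sfst_trace q x) ++ [:: inr (sfst_state q x)].

Definition trace_output (d : (Q * S) + Q) : seq G :=
  match d with inl (q, a) => (sfst_delta q a).2 | inr q => sfst_sigma q end.

Lemma sfst_state_cat q x y : sfst_state q (x ++ y) = sfst_state (sfst_state q x) y.
Proof. by elim: x q => //= a x IHx q. Qed.

Lemma sfst_trace_cat q x y :
  sfst_trace q (x ++ y) = sfst_trace q x ++ sfst_trace (sfst_state q x) y.
Proof. by elim: x q => //= a x IHx q; rewrite IHx. Qed.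

Lemma sfst_run_trace q x :
  sfst_run q x = (sfst_state q x, flatten (map trace_output (map inl (sfst_trace q x)))).
Proof.
elim: x q => //= a x IHx q.
by case: (sfst_delta q a) => r y; rewrite IHx.
Qed.

Lemma sfst_state_last_trace q x :
  sfst_state q x =
  odflt q (omap (fun t => next t.1 t.2) (last None (map Some (sfst_trace q x)))).
Proof.
elim/last_ind: x => [|x a _] //.
by rewrite -cats1 sfst_state_cat sfst_trace_cat map_cat last_cat.
Qed.

Lemma trace_word_output q x :
  flatten (map trace_output (trace_word q x)) =
  (sfst_run q x).2 ++ sfst_sigma (sfst_run q x).1.
Proof. by rewrite sfst_run_trace /trace_word map_cat flatten_cat /= cats0. Qed.

Lemma drop_trace_word q w y :
  drop (size (map (@inl _ Q) (sfst_trace q w))) (trace_word q (w ++ y)) =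
  trace_word (sfst_state q w) y.
Proof.
by rewrite /trace_word sfst_trace_cat sfst_state_cat map_cat -catA drop_size_cat.
Qed.

(* Extending w by the empty word and by one letter a, the traces part ways
   right after the transitions of w: one continues with the state, the other
   with a transition. *)
Lemma is_lcp_trace_word (a : S) q w :
  is_lcp (fun s => exists y, s = trace_word q (w ++ y)) (map (@inl _ Q) (sfst_trace q w)).
Proof.
split=> [_ [y ->]|p lcp_p].
  by rewrite /trace_word sfst_trace_cat map_cat -catA prefix_prefix.
have := lcp_p _ (ex_intro _ [::] erefl); have := lcp_p _ (ex_intro _ [:: a] erefl).
rewrite /trace_word cats0 sfst_trace_cat map_cat -!catA /=.
exact: prefix_cat_cons_neq.
Qed.

Lemma TOSL_trace_word q : TOSL 2 id (trace_word q).
Proof.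
move=> w x pw px lcp_w lcp_x; rewrite /= !suff1 => eq_last y.
case Ewx: (w ++ x) => [|a ?].
  by move: Ewx => /nilP; rewrite cat_nilp => /andP[/nilP w0 /nilP x0]; subst w x;
    rewrite (is_lcp_uniq lcp_w lcp_x).
have pwE := is_lcp_uniq lcp_w (is_lcp_trace_word a q w).
have pxE := is_lcp_uniq lcp_x (is_lcp_trace_word a q x).
subst pw px; rewrite !drop_trace_word.
suff -> : sfst_state q w = sfst_state q x by [].
rewrite !sfst_state_last_trace; move: eq_last; rewrite !last_Some_map.
by case: (last None _) => [[q1 a1]|]; case: (last None _) => [[q2 a2]|] // [-> ->].
Qed.

End RunTrace.

Theorem proposition21 (Sigma Gamma : finType) (f : seq Sigma -> seq Gamma) :
  subsequential f ->
  exists (Delta : finType) (g : seq Sigma -> seq Delta)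
         (tau : seq (Sigma + Delta)%type -> seq (Sigma + Delta)%type)
         (h : seq Delta -> seq Gamma),
    is_tier tau /\ TOSL 2 tau g /\ is_hom h /\ forall x, f x = h (g x).
Proof.
move=> [T computes_f].
exists ((sfst_Q T * Sigma) + sfst_Q T)%type, (trace_word (sfst_q0 T)), id,
  (fun s => flatten (map (trace_output (T:=T)) s)).
split; first exact: is_tier_id.
split; first exact: TOSL_trace_word.
split; first exact: is_hom_flatten_map.
by move=> x; rewrite computes_f trace_word_output.
Qed.
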